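(* Let $X,Y,Z$ be random variables on finite alphabets $\mathcal{X},\mathcal{Y},\mathcal{Z}$. For each $y\in\mathcal{Y}$ with $\Pr(Y=y)>0$, let $(A_y,B_y,C_y)$ be the random triple on $\mathcal{X}\times\mathcal{Y}\times\mathcal{Z}$ with $\Pr(A_y=x,B_y=y',C_y=z)=0$ if $\Pr(Z=z)=0$ and $=\Pr(X=x,Y=y',Z=z)\Pr(Z=z\mid Y=y)/\Pr(Z=z)$ otherwise; and for each $x\in\mathcal{X}$ with $\Pr(X=x)>0$, let $(A_x,B_x,C_x)$ be the random triple on $\mathcal{X}\times\mathcal{Y}\times\mathcal{Z}$ with $\Pr(A_x=x',B_x=y,C_x=z)=0$ if $\Pr(Z=z)=0$ and $=\Pr(X=x',Y=y,Z=z)\Pr(Z=z\mid X=x)/\Pr(Z=z)$ otherwise. Let $(A_{Z|Y},Y)$ be the pair on $\mathcal{X}\times\mathcal{Y}$ with $\Pr(A_{Z|Y}=x,Y=y)=\Pr(Y=y)\Pr(A_y=x)$ (and $0$ if $\Pr(Y=y)=0$), and let $(X,B_{Z|X})$ be the pair on $\mathcal{X}\times\mathcal{Y}$ with $\Pr(X=x,B_{Z|X}=y)=\Pr(X=x)\Pr(B_x=y)$ (and $0$ if $\Pr(X=x)=0$). Then $I(A_{Z|Y};Y)=I(X;B_{Z|X})$.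
   Context: $I$ denotes mutual information. *)

From HB Require Import structures.
From mathcomp Require Import all_boot all_order all_algebra.
From mathcomp Require Import reals exp.
Set Implicit Arguments. Unset Strict Implicit. Unset Printing Implicit Defensive.
Import Order.TTheory GRing.Theory Num.Theory.
Local Open Scope ring_scope.

Section Defs.
Variable R : realType.

Definition is_pmf (T : finType) (p : T -> R) :=
  (forall t, 0 <= p t) /\ \sum_t p t = 1.

Definition mutual_info (X Y : finType) (q : X -> Y -> R) : R :=
  \sum_x \sum_y
    (if q x y == 0 then 0
     else q x y * ln (q x y / ((\sum_y' q x y') * (\sum_x' q x' y)))).

Variables (X Y Z : finType) (p : X -> Y -> Z -> R).

Definition pX x := \sum_y \sum_z p x y z.
Definition pY y := \sum_x \sum_z p x y z.
Definition pZ z := \sum_x \sum_y p x y z.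
Definition pYZ y z := \sum_x p x y z.
Definition pXZ x z := \sum_y p x y z.

Definition pZgY z y := pYZ y z / pY y.
Definition pZgX z x := pXZ x z / pX x.

Definition tripY (y : Y) (x : X) (y' : Y) (z : Z) : R :=
  if pZ z == 0 then 0 else p x y' z * pZgY z y / pZ z.
Definition tripX (x : X) (x' : X) (y : Y) (z : Z) : R :=
  if pZ z == 0 then 0 else p x' y z * pZgX z x / pZ z.

Definition PrA (y : Y) (x : X) := \sum_y' \sum_z tripY y x y' z.
Definition PrB (x : X) (y : Y) := \sum_x' \sum_z tripX x x' y z.

Definition pAZY (x : X) (y : Y) : R := if pY y == 0 then 0 else pY y * PrA y x.
Definition pXBZX (x : X) (y : Y) : R := if pX x == 0 then 0 else pX x * PrB x y.

End Defs.

From HB Require Import structures.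
From mathcomp Require Import all_boot all_order all_algebra.
From mathcomp Require Import reals exp.
From mathcomp Require Import ring.
Import Order.TTheory GRing.Theory Num.Theory.
Local Open Scope ring_scope.

(* Both pairs have the same joint law: after the normalisations by Pr(Y = y)
   and Pr(X = x) cancel, each joint pmf at (x, y) equals
   sum_z Pr(X = x, Z = z) Pr(Y = y, Z = z) / Pr(Z = z). *)

Lemma eq_mutual_info (R : realType) (X Y : finType) (q q' : X -> Y -> R) :
  (forall x y, q x y = q' x y) -> mutual_info q = mutual_info q'.
Proof.
move=> eq_q; apply: eq_bigr => x _; apply: eq_bigr => y _.
by rewrite (eq_bigr _ (fun y' _ => eq_q x y')) (eq_bigr _ (fun x' _ => eq_q x' y)) eq_q.
Qed.

Section MarkovJoint.
Variables (R : realType) (X Y Z : finType) (p : X -> Y -> Z -> R).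
Hypothesis p_ge0 : forall x y z, 0 <= p x y z.

(* The joint pmf of (X', Y') when X' - Z - Y' is a Markov chain whose (X', Z)
   and (Y', Z) marginals are those of p. *)
Definition markov_joint (x : X) (y : Y) : R :=
  \sum_z (if pZ p z == 0 then 0 else pXZ p x z * pYZ p y z / pZ p z).

Lemma pX_sum_pXZ x : pX p x = \sum_z pXZ p x z.
Proof. exact: exchange_big. Qed.

Lemma pY_sum_pYZ y : pY p y = \sum_z pYZ p y z.
Proof. exact: exchange_big. Qed.

Lemma pXZ_eq0 x z : pX p x = 0 -> pXZ p x z = 0.
Proof.
by rewrite pX_sum_pXZ => /psumr_eq0P -> // z' _; apply: sumr_ge0.
Qed.

Lemma pYZ_eq0 y z : pY p y = 0 -> pYZ p y z = 0.
Proof.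
by rewrite pY_sum_pYZ => /psumr_eq0P -> // z' _; apply: sumr_ge0.
Qed.

Lemma markov_joint_eq0l x y : pX p x = 0 -> markov_joint x y = 0.
Proof.
by move=> pX0; rewrite /markov_joint big1 // => z _; rewrite pXZ_eq0 // !mul0r if_same.
Qed.

Lemma markov_joint_eq0r x y : pY p y = 0 -> markov_joint x y = 0.
Proof.
by move=> pY0; rewrite /markov_joint big1 // => z _; rewrite pYZ_eq0 // mulr0 mul0r if_same.
Qed.

Lemma pAZY_markov_joint x y : pAZY p x y = markov_joint x y.
Proof.
rewrite /pAZY; have [pY0 | pY_neq0] := eqVneq (pY p y) 0.
  by rewrite markov_joint_eq0r.
rewrite /PrA exchange_big mulr_sumr; apply: eq_bigr => z _.
rewrite /tripY; have [_ | pZ_neq0] := eqVneq (pZ p z) 0; first by rewrite big1 ?mulr0.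
rewrite -!mulr_suml /pZgY /pXZ; field.
by rewrite pZ_neq0 pY_neq0.
Qed.

Lemma pXBZX_markov_joint x y : pXBZX p x y = markov_joint x y.
Proof.
rewrite /pXBZX; have [pX0 | pX_neq0] := eqVneq (pX p x) 0.
  by rewrite markov_joint_eq0l.
rewrite /PrB exchange_big mulr_sumr; apply: eq_bigr => z _.
rewrite /tripX; have [_ | pZ_neq0] := eqVneq (pZ p z) 0; first by rewrite big1 ?mulr0.
rewrite -!mulr_suml /pZgX /pYZ; field.
by rewrite pZ_neq0 pX_neq0.
Qed.

End MarkovJoint.

Theorem lemma7 (R : realType) (X Y Z : finType) (p : X -> Y -> Z -> R)
  (hp : is_pmf (fun t : X * Y * Z => p t.1.1 t.1.2 t.2)) :
  mutual_info (pAZY p) = mutual_info (pXBZX p).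
Proof.
have p_ge0 x y z : 0 <= p x y z by exact: hp.1 (x, y, z).
apply: eq_mutual_info => x y.
by rewrite pAZY_markov_joint // pXBZX_markov_joint.
Qed.
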